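(* Let $A$ and $B$ be weighted geometric mean closed Archimedean $\Phi$-algebras over $\mathbb{K}$ with unit elements $e$ and $e'$ respectively. Let $C$ be a $\Phi$-subalgebra of $A$ and let $T\colon C\to B$ be a multiplicative vector lattice homomorphism with $T(e)=e'$. Let $a\in A^+$ and $r\in(0,\infty)$. If $a\in C$ and $a^r\in C$, then $T(a^r)=\bigl(T(a)\bigr)^r$.
   Context: $\mathbb{K}$ denotes $\mathbb{R}$ or $\mathbb{C}$. An Archimedean vector lattice over $\mathbb{C}$ is $E+iE$ where $E$ is an Archimedean real vector lattice in which $\sup\{(\cos\theta)f+(\sin\theta)g:\theta\in[0,2\pi]\}$ exists for all $f,g$, with modulus $|f+ig|$ equal to that supremum; over $\mathbb{R}$ it is an Archimedean real vector lattice. $A^+=\{a:|a|=a\}$, $A_\rho=A^+-A^+$ with its real lattice order. An Archimedean $\Phi$-algebra over $\mathbb{K}$: $A_\rho$ is an $f$-algebra with multiplicative identity (multiplication extended complex-bilinearly in the complex case); a $\Phi$-subalgebra is a subalgebra and vector sublattice containing the unit. $A$ is weighted geometric mean closed if for all $f_1,\dots,f_n\in A$, $r_k\in(0,1)$ with $\sum r_k=1$, $\triangle_{k=1}^n(f_k,r_k):=\inf\{\sum r_k\theta_k|f_k|:\theta_k>0,\ \prod\theta_k^{r_k}=1\}$ exists in $A$. For $a\in A^+$ and $r\in(0,\infty)$, with $\lfloor r\rfloor=\max\{n\in\mathbb{N}\cup\{0\}:n\le r\}$ and $\tilde r=r-\lfloor r\rfloor$, define $a^r=a^{\lfloor r\rfloor}\inf\{\tilde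 r\theta_1a+(1-\tilde r)\theta_2e:\theta_1,\theta_2\in(0,\infty),\ \theta_1^{\tilde r}\theta_2^{1-\tilde r}=1\}$, where $a^{0}=e$ and the infimum is taken to be $e$ when $\tilde r=0$ (so $a^r$ is the ordinary power for integer $r$). $T$ multiplicative means $T(ab)=T(a)T(b)$; vector lattice homomorphism means linear with $|T(f)|=T(|f|)$. *)

From Stdlib Require Import Reals.
Open Scope R_scope.

(* Archimedean real f-algebras with unit (real Phi-algebras).           *)
Record RPhi := MkRPhi {
  car :> Type;
  zr : car;
  add : car -> car -> car;
  opp : car -> car;
  scal : R -> car -> car;
  mul : car -> car -> car;
  one : car;
  le : car -> car -> Prop;
  addA : forall x y w, add x (add y w) = add (add x y) w;
  addC : forall x y, add x y = add y x;
  add0 : forall x, add zr x = x;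
  addN : forall x, add x (opp x) = zr;
  scalA : forall a b x, scal a (scal b x) = scal (a * b) x;
  scal1 : forall x, scal 1 x = x;
  scalDr : forall a x y, scal a (add x y) = add (scal a x) (scal a y);
  scalDl : forall a b x, scal (a + b) x = add (scal a x) (scal b x);
  le_refl : forall x, le x x;
  le_antisym : forall x y, le x y -> le y x -> x = y;
  le_trans : forall x y w, le x y -> le y w -> le x w;
  le_add : forall x y w, le x y -> le (add x w) (add y w);
  le_scal : forall a x, 0 <= a -> le zr x -> le zr (scal a x);
  sup_ex : forall x y, exists s,
      le x s /\ le y s /\ (forall u, le x u -> le y u -> le s u);
  archi : forall x y,
      (forall n : nat, le zr (scal (INR n) x) /\ le (scal (INR n) x) y) -> x = zr;
  mulA : forall x y w, mul x (mul y w) = mul (mul x y) w;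
  mulDl : forall x y w, mul (add x y) w = add (mul x w) (mul y w);
  mulDr : forall x y w, mul w (add x y) = add (mul w x) (mul w y);
  mul_scall : forall a x y, mul (scal a x) y = scal a (mul x y);
  mul_scalr : forall a x y, mul x (scal a y) = scal a (mul x y);
  mul_pos : forall x y, le zr x -> le zr y -> le zr (mul x y);
  f_prop : forall x y w,
      (le zr x /\ le zr y /\ (forall u, le u x -> le u y -> le u zr)) ->
      le zr w ->
      (le zr (mul w x) /\ le zr y /\ (forall u, le u (mul w x) -> le u y -> le u zr)) /\
      (le zr (mul x w) /\ le zr y /\ (forall u, le u (mul x w) -> le u y -> le u zr));
  one_l : forall x, mul one x = x;
  one_r : forall x, mul x one = x
}.

Arguments zr {_}. Arguments add {_}. Arguments opp {_}. Arguments scal {_}.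
Arguments mul {_}. Arguments one {_}. Arguments le {_}.

Definition IsSup (E : RPhi) (S : E -> Prop) (m : E) : Prop :=
  (forall x, S x -> le x m) /\ (forall u, (forall x, S x -> le x u) -> le m u).

(* The scalar field K and the Phi-algebra over K built on A_rho = E.    *)
(* Over R the algebra is E itself; over C it is E + iE = E * E.         *)
Inductive Kfield := Kreal | Kcomplex.

Definition Kscalar (K : Kfield) : Type :=
  match K with Kreal => R | Kcomplex => (R * R)%type end.

Definition Kcar (K : Kfield) (E : RPhi) : Type :=
  match K with Kreal => car E | Kcomplex => (car E * car E)%type end.

Definition Kzero (K : Kfield) (E : RPhi) : Kcar K E :=
  match K as K0 return Kcar K0 E with
  | Kreal => @zr E
  | Kcomplex => (@zr E, @zr E)
  end.

Definition Kone (K : Kfield) (E : RPhi) : Kcar K E :=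
  match K as K0 return Kcar K0 E with
  | Kreal => @one E
  | Kcomplex => (@one E, @zr E)
  end.

Definition Kadd (K : Kfield) (E : RPhi) : Kcar K E -> Kcar K E -> Kcar K E :=
  match K as K0 return Kcar K0 E -> Kcar K0 E -> Kcar K0 E with
  | Kreal => @add E
  | Kcomplex => fun p q => (add (fst p) (fst q), add (snd p) (snd q))
  end.

Definition Kopp (K : Kfield) (E : RPhi) : Kcar K E -> Kcar K E :=
  match K as K0 return Kcar K0 E -> Kcar K0 E with
  | Kreal => @opp E
  | Kcomplex => fun p => (opp (fst p), opp (snd p))
  end.

(* multiplication by a scalar of K: (a+ib)(x+iy) = (ax - by) + i(ay + bx) *)
Definition Kscal (K : Kfield) (E : RPhi) : Kscalar K -> Kcar K E -> Kcar K E :=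
  match K as K0 return Kscalar K0 -> Kcar K0 E -> Kcar K0 E with
  | Kreal => @scal E
  | Kcomplex => fun c p =>
      (add (scal (fst c) (fst p)) (opp (scal (snd c) (snd p))),
       add (scal (fst c) (snd p)) (scal (snd c) (fst p)))
  end.

Definition Krscal (K : Kfield) (E : RPhi) : R -> Kcar K E -> Kcar K E :=
  match K as K0 return R -> Kcar K0 E -> Kcar K0 E with
  | Kreal => @scal E
  | Kcomplex => fun a p => (scal a (fst p), scal a (snd p))
  end.

(* complex-bilinear extension of the multiplication *)
Definition Kmul (K : Kfield) (E : RPhi) : Kcar K E -> Kcar K E -> Kcar K E :=
  match K as K0 return Kcar K0 E -> Kcar K0 E -> Kcar K0 E with
  | Kreal => @mul E
  | Kcomplex => fun p q =>
      (add (mul (fst p) (fst q)) (opp (mul (snd p) (snd q))),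
       add (mul (fst p) (snd q)) (mul (snd p) (fst q)))
  end.

Definition IsAbs (K : Kfield) (E : RPhi) : Kcar K E -> Kcar K E -> Prop :=
  match K as K0 return Kcar K0 E -> Kcar K0 E -> Prop with
  | Kreal => fun f m => IsSup E (fun x => x = f \/ x = opp f) m
  | Kcomplex => fun f m =>
      snd m = zr /\
      IsSup E (fun x => exists t, 0 <= t <= 2 * PI /\
                 x = add (scal (cos t) (fst f)) (scal (sin t) (snd f))) (fst m)
  end.

(* Archimedean vector lattice over K: every modulus exists (automatic over R,
   this is the defining supremum condition over C). *)
Definition KVL (K : Kfield) (E : RPhi) : Prop :=
  forall f : Kcar K E, exists m, IsAbs K E f m.

Definition Kpos (K : Kfield) (E : RPhi) (a : Kcar K E) : Prop := IsAbs K E a a.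

Definition Kle (K : Kfield) (E : RPhi) (a b : Kcar K E) : Prop :=
  Kpos K E (Kadd K E b (Kopp K E a)).

Definition KIsInf (K : Kfield) (E : RPhi) (S : Kcar K E -> Prop) (m : Kcar K E) : Prop :=
  (forall x, S x -> Kle K E m x) /\
  (forall l, (forall x, S x -> Kle K E l x) -> Kle K E l m).

Fixpoint Ksum (K : Kfield) (E : RPhi) (n : nat) (F : nat -> Kcar K E) : Kcar K E :=
  match n with
  | O => Kzero K E
  | S n' => Kadd K E (Ksum K E n' F) (F n')
  end.

Fixpoint Rsumn (n : nat) (F : nat -> R) : R :=
  match n with O => 0 | S n' => Rsumn n' F + F n' end.

Fixpoint Rprodn (n : nat) (F : nat -> R) : R :=
  match n with O => 1 | S n' => Rprodn n' F * F n' end.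

(* weighted geometric mean closedness; g k plays the role of |f_k| *)
Definition WGMClosed (K : Kfield) (E : RPhi) : Prop :=
  forall (n : nat) (f : nat -> Kcar K E) (r : nat -> R) (g : nat -> Kcar K E),
    (forall k, (k < n)%nat -> 0 < r k < 1) ->
    Rsumn n r = 1 ->
    (forall k, (k < n)%nat -> IsAbs K E (f k) (g k)) ->
    exists m, KIsInf K E
      (fun x => exists th : nat -> R,
          (forall k, (k < n)%nat -> 0 < th k) /\
          Rprodn n (fun k => Rpower (th k) (r k)) = 1 /\
          x = Ksum K E n (fun k => Krscal K E (r k * th k) (g k))) m.

Fixpoint Kpow_nat (K : Kfield) (E : RPhi) (a : Kcar K E) (n : nat) : Kcar K E :=
  match n with
  | O => Kone K E
  | S n' => Kmul K E (Kpow_nat K E a n') a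
  end.

Definition IsRPow (K : Kfield) (E : RPhi) (a : Kcar K E) (r : R) (p : Kcar K E) : Prop :=
  exists (n : nat) (q : Kcar K E),
    INR n <= r < INR n + 1 /\
    (r = INR n -> q = Kone K E) /\
    (r <> INR n ->
       KIsInf K E
         (fun x => exists t1 t2, 0 < t1 /\ 0 < t2 /\
             Rpower t1 (r - INR n) * Rpower t2 (1 - (r - INR n)) = 1 /\
             x = Kadd K E (Krscal K E ((r - INR n) * t1) a)
                          (Krscal K E ((1 - (r - INR n)) * t2) (Kone K E))) q) /\
    p = Kmul K E (Kpow_nat K E a n) q.

Definition KPhiSub (K : Kfield) (E : RPhi) (C : Kcar K E -> Prop) : Prop :=
  (forall x y, C x -> C y -> C (Kadd K E x y)) /\
  (forall (c : Kscalar K) x, C x -> C (Kscal K E c x)) /\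
  (forall x y, C x -> C y -> C (Kmul K E x y)) /\
  C (Kone K E) /\
  (forall x m, C x -> IsAbs K E x m -> C m).

(* T : C -> B (modelled as a total map, constrained only on C) *)
Definition KLinearOn (K : Kfield) (A B : RPhi) (C : Kcar K A -> Prop)
  (T : Kcar K A -> Kcar K B) : Prop :=
  (forall x y, C x -> C y -> T (Kadd K A x y) = Kadd K B (T x) (T y)) /\
  (forall (c : Kscalar K) x, C x -> T (Kscal K A c x) = Kscal K B c (T x)).

Definition KLatHomOn (K : Kfield) (A B : RPhi) (C : Kcar K A -> Prop)
  (T : Kcar K A -> Kcar K B) : Prop :=
  KLinearOn K A B C T /\
  (forall x m, C x -> IsAbs K A x m -> IsAbs K B (T x) (T m)).

Definition KMultOn (K : Kfield) (A B : RPhi) (C : Kcar K A -> Prop)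
  (T : Kcar K A -> Kcar K B) : Prop :=
  forall x y, C x -> C y -> T (Kmul K A x y) = Kmul K B (T x) (T y).

(* On the real part A_rho, the power a^r is a^n q, where q is the infimum of
   the combinations s t1 a + (1-s) t2 e over the curve t1^s t2^(1-s) = 1.
   For every eps > 0 finitely many points of that curve approximate every
   other point within eps in both coordinates, so the finite meet W of the
   corresponding combinations satisfies q <= W <= q + eps (a + e).  A
   multiplicative lattice homomorphism preserves finite meets, products and
   positivity, so T(a^n q) and (Ta)^n q' (with q' the analogous infimum in B)
   both lie within eps (Ta)^n (Ta + e) of T(a^n W); being Archimedean, B
   forces them to be equal.  Over C nothing new happens: a, a^r and all
   infima involved lie in the real part, on which T acts as a real
   homomorphism. *)
From Stdlib Require Import Reals.
Open Scope R_scope.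
From Stdlib Require Import Lra Lia ClassicalEpsilon.

Definition sub (E : RPhi) (x y : E) : E := add x (opp y).
Arguments sub {_}.

Section Algebra.
Variable E : RPhi.
Implicit Types x y z w : E.

Lemma addr0 x : add x zr = x.
Proof. rewrite addC; apply add0. Qed.
Lemma addNr x : add (opp x) x = zr.
Proof. rewrite addC; apply addN. Qed.
Lemma addK x y : add (add x y) (opp y) = x.
Proof. rewrite <- addA, addN; apply addr0. Qed.
Lemma addKr x y : add (add x (opp y)) y = x.
Proof. rewrite <- addA, addNr; apply addr0. Qed.
Lemma addACA x y z w : add (add x y) (add z w) = add (add x z) (add y w).
Proof. rewrite <- !addA; f_equal; rewrite !addA; f_equal; apply addC. Qed.
Lemma add_cancel x y z : add x y = add x z -> y = z.
Proof.
  intro H. rewrite <- (add0 _ y), <- (add0 _ z), <- (addNr x), <- !addA, H.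
  reflexivity.
Qed.
Lemma opp_unique x y : add x y = zr -> y = opp x.
Proof. intro H. apply (add_cancel x). rewrite H, addN; reflexivity. Qed.
Lemma oppK x : opp (opp x) = x.
Proof. symmetry. apply opp_unique, addNr. Qed.
Lemma opp0 : opp (@zr E) = zr.
Proof. symmetry; apply opp_unique, add0. Qed.
Lemma oppD x y : opp (add x y) = add (opp x) (opp y).
Proof.
  symmetry; apply opp_unique.
  rewrite (addC _ (opp x)), addA, <- (addA _ x), addN, addr0, addN; reflexivity.
Qed.
Lemma oppB x y : opp (sub x y) = sub y x.
Proof. unfold sub; rewrite oppD, oppK, addC; reflexivity. Qed.
Lemma sub0 x : sub x zr = x.
Proof. unfold sub; rewrite opp0; apply addr0. Qed.

Lemma scal0l x : scal 0 x = zr.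
Proof.
  apply (add_cancel (scal 0 x)). rewrite <- scalDl, Rplus_0_r, addr0; reflexivity.
Qed.
Lemma scal0r (c : R) : scal c (@zr E) = zr.
Proof. apply (add_cancel (scal c zr)). rewrite <- scalDr, add0, addr0; reflexivity. Qed.
Lemma scalNl (c : R) x : scal (- c) x = opp (scal c x).
Proof. apply opp_unique. rewrite <- scalDl, Rplus_opp_r; apply scal0l. Qed.
Lemma scalNr (c : R) x : scal c (opp x) = opp (scal c x).
Proof. apply opp_unique. rewrite <- scalDr, addN; apply scal0r. Qed.
Lemma scalN1 x : scal (-1) x = opp x.
Proof. replace (-1) with (- (1)) by ring. rewrite scalNl, scal1; reflexivity. Qed.
Lemma scalB (c : R) x y : scal c (sub x y) = sub (scal c x) (scal c y).
Proof. unfold sub; rewrite scalDr, scalNr; reflexivity. Qed.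
Lemma scal_half2 x : scal (/2) (add x x) = x.
Proof.
  rewrite <- (scal1 _ x) at 1 2. rewrite <- scalDl, scalA.
  replace (/2 * (1 + 1)) with 1 by field. apply scal1.
Qed.

Lemma mul0l x : mul zr x = zr.
Proof. apply (add_cancel (mul zr x)). rewrite <- mulDl, !addr0; reflexivity. Qed.
Lemma mul0r x : mul x zr = zr.
Proof. apply (add_cancel (mul x zr)). rewrite <- mulDr, !addr0; reflexivity. Qed.
Lemma mulNr x y : mul x (opp y) = opp (mul x y).
Proof. apply opp_unique. rewrite <- mulDr, addN; apply mul0r. Qed.
Lemma mulBr w x y : mul w (sub x y) = sub (mul w x) (mul w y).
Proof. unfold sub; rewrite mulDr, mulNr; reflexivity. Qed.
Lemma le_add2 x y z w : le x y -> le z w -> le (add x z) (add y w).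
Proof.
  intros H1 H2. apply le_trans with (add y z); [now apply le_add|].
  rewrite (addC _ y z), (addC _ y w); now apply le_add.
Qed.
Lemma le0_add x y : le zr x -> le zr y -> le zr (add x y).
Proof. intros. rewrite <- (add0 _ zr). now apply le_add2. Qed.
Lemma subr_ge0 x y : le x y -> le zr (sub y x).
Proof. intro H. rewrite <- (addN _ x). now apply le_add. Qed.
Lemma subr_ge0_le x y : le zr (sub y x) -> le x y.
Proof.
  intro H. apply (le_add _ _ _ x) in H. rewrite add0 in H. unfold sub in H.
  now rewrite addKr in H.
Qed.
Lemma le_opp x y : le x y -> le (opp y) (opp x).
Proof.
  intro H. apply subr_ge0_le. unfold sub; rewrite oppK, addC. now apply subr_ge0.
Qed.
Lemma le_opp_inv x y : le (opp y) (opp x) -> le x y.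
Proof. intro H. apply le_opp in H. now rewrite !oppK in H. Qed.
Lemma le_subl_addr x y z : le (sub x z) y -> le x (add y z).
Proof. intro H. apply (le_add _ _ _ z) in H. unfold sub in H; now rewrite addKr in H. Qed.
Lemma le_addr_subl x y z : le x (add y z) -> le (sub x z) y.
Proof. intro H. apply (le_add _ _ _ (opp z)) in H. unfold sub; now rewrite addK in H. Qed.
Lemma le_addr_subr x y z : le x (sub y z) -> le (add x z) y.
Proof. intro H. apply (le_add _ _ _ z) in H. unfold sub in H; now rewrite addKr in H. Qed.
Lemma le_subr_addr x y z : le (add x z) y -> le x (sub y z).
Proof. intro H. apply (le_add _ _ _ (opp z)) in H. unfold sub; now rewrite addK in H. Qed.
Lemma le_scal2r (c : R) x y : 0 <= c -> le x y -> le (scal c x) (scal c y).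
Proof.
  intros Hc H. apply subr_ge0_le. rewrite <- scalB. apply le_scal; auto.
  now apply subr_ge0.
Qed.
Lemma le_scal2l (c d : R) x : c <= d -> le zr x -> le (scal c x) (scal d x).
Proof.
  intros Hc H. apply subr_ge0_le. unfold sub. rewrite <- scalNl, <- scalDl.
  apply le_scal; auto; lra.
Qed.
Lemma le_mul2l w x y : le zr w -> le x y -> le (mul w x) (mul w y).
Proof.
  intros Hw H. apply subr_ge0_le. rewrite <- mulBr. apply mul_pos; auto.
  now apply subr_ge0.
Qed.

(* Via [archi]: n (x - y)^+ <= z for all n forces (x - y)^+ = 0. *)
Lemma le_of_le_add_eps x y z : le zr z ->
  (forall eps, 0 < eps -> le x (add y (scal eps z))) -> le x y.
Proof.
  intros Hz H. destruct (sup_ex E (sub x y) zr) as (w & Hw1 & Hw2 & Hw3).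
  assert (Hw : w = zr).
  { apply archi with z. intros [|k].
    - simpl. rewrite scal0l. split; [apply le_refl|auto].
    - assert (Hk : 0 < INR (S k)) by (apply lt_0_INR; lia).
      split; [apply le_scal; [lra|auto]|].
      rewrite <- (scal1 _ z). replace 1 with (INR (S k) * / INR (S k)) by (field; lra).
      rewrite <- scalA. apply le_scal2r; [lra|]. apply Hw3.
      + apply le_addr_subl. rewrite addC. apply H, Rinv_0_lt_compat; lra.
      + apply le_scal; auto. left; apply Rinv_0_lt_compat; lra. }
  subst w. apply le_subl_addr in Hw1. now rewrite add0 in Hw1.
Qed.

End Algebra.

Section Lattice.
Variable E : RPhi.
Implicit Types x y z w u : E.

Definition sup x y : E :=
  proj1_sig (constructive_indefinite_description _ (sup_ex E x y)).

Lemma sup_spec x y :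
  le x (sup x y) /\ le y (sup x y) /\ (forall u, le x u -> le y u -> le (sup x y) u).
Proof. unfold sup. destruct (constructive_indefinite_description _ _) as [s Hs]; exact Hs. Qed.
Lemma sup_l x y : le x (sup x y). Proof. apply sup_spec. Qed.
Lemma sup_r x y : le y (sup x y). Proof. apply sup_spec. Qed.
Lemma sup_le x y u : le x u -> le y u -> le (sup x y) u.
Proof. apply sup_spec. Qed.
Lemma sup_unique x y m : le x m -> le y m ->
  (forall u, le x u -> le y u -> le m u) -> m = sup x y.
Proof.
  intros H1 H2 H3. apply le_antisym; [apply H3; [apply sup_l|apply sup_r]|].
  now apply sup_le.
Qed.
Lemma supC x y : sup x y = sup y x.
Proof. apply sup_unique; [apply sup_r|apply sup_l|intros; now apply sup_le]. Qed.
Lemma supDr x y z : sup (add x z) (add y z) = add (sup x y) z.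
Proof.
  symmetry. apply sup_unique; [apply le_add, sup_l|apply le_add, sup_r|].
  intros u H1 H2. apply le_addr_subr. apply sup_le; now apply le_subr_addr.
Qed.
Lemma supZr (c : R) x y : 0 < c -> sup (scal c x) (scal c y) = scal c (sup x y).
Proof.
  intro Hc. symmetry. apply sup_unique.
  - apply le_scal2r; [lra|apply sup_l].
  - apply le_scal2r; [lra|apply sup_r].
  - intros u H1 H2. rewrite <- (scal1 _ u). replace 1 with (c * / c) by (field; lra).
    rewrite <- scalA. apply le_scal2r; [lra|].
    assert (Hc' : 0 <= / c) by (left; apply Rinv_0_lt_compat; lra).
    apply sup_le; [rewrite <- (scal1 _ x)|rewrite <- (scal1 _ y)];
      replace 1 with (/ c * c) by (field; lra); rewrite <- scalA; now apply le_scal2r.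
Qed.
Lemma IsSup_sup x y m : IsSup E (fun v => v = x \/ v = y) m <-> m = sup x y.
Proof.
  split.
  - intros [H1 H2]. apply sup_unique; [apply H1; auto|apply H1; auto|].
    intros u Hx Hy. apply H2. intros v [->| ->]; auto.
  - intros ->. split; [intros v [->| ->]; [apply sup_l|apply sup_r]|].
    intros u H. apply sup_le; apply H; auto.
Qed.
Lemma IsSup_unique S m1 m2 : IsSup E S m1 -> IsSup E S m2 -> m1 = m2.
Proof. intros [H1 H2] [H3 H4]. apply le_antisym; [apply H2|apply H4]; auto. Qed.

Definition meet x y : E := opp (sup (opp x) (opp y)).

Lemma meet_l x y : le (meet x y) x.
Proof. unfold meet. apply le_opp_inv. rewrite oppK. apply sup_l. Qed.
Lemma meet_r x y : le (meet x y) y.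
Proof. unfold meet. apply le_opp_inv. rewrite oppK. apply sup_r. Qed.
Lemma meet_ge x y u : le u x -> le u y -> le u (meet x y).
Proof.
  intros H1 H2. unfold meet. apply le_opp_inv. rewrite oppK.
  apply sup_le; now apply le_opp.
Qed.
Lemma meetDr x y z : meet (add x z) (add y z) = add (meet x y) z.
Proof. unfold meet. rewrite !oppD, supDr, oppD, oppK; reflexivity. Qed.
Lemma meetC x y : meet x y = meet y x.
Proof. unfold meet; now rewrite supC. Qed.

Definition abs x : E := sup x (opp x).

Lemma le_abs x : le x (abs x). Proof. apply sup_l. Qed.
Lemma le_abs_opp x : le (opp x) (abs x). Proof. apply sup_r. Qed.
Lemma absZ (c : R) x : 0 < c -> abs (scal c x) = scal c (abs x).
Proof. intro. unfold abs. rewrite <- scalNr. now apply supZr. Qed.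
Lemma abs_ge0 x : le zr (abs x).
Proof.
  rewrite <- (scal_half2 _ (abs x)). apply le_scal; [lra|].
  rewrite <- (addN _ x). apply le_add2; [apply le_abs|apply le_abs_opp].
Qed.
Lemma abs_id x : le zr x -> abs x = x.
Proof.
  intro H. symmetry; apply sup_unique; [apply le_refl| |auto].
  apply le_trans with zr; auto. rewrite <- opp0. now apply le_opp.
Qed.
Lemma scal_le_abs (c : R) x : -1 <= c <= 1 -> le (scal c x) (abs x).
Proof.
  intro Hc. destruct (Rle_or_lt 0 c) as [H|H].
  - apply le_trans with (scal c (abs x)); [now apply le_scal2r, le_abs|].
    rewrite <- (scal1 _ (abs x)) at 2. apply le_scal2l; [lra|apply abs_ge0].
  - replace c with (- - c) by ring. rewrite scalNl, <- scalNr.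
    apply le_trans with (scal (- c) (abs x)); [apply le_scal2r; [lra|apply le_abs_opp]|].
    rewrite <- (scal1 _ (abs x)) at 2. apply le_scal2l; [lra|apply abs_ge0].
Qed.

Lemma meet_abs x y : meet x y = scal (/2) (sub (add x y) (abs (sub x y))).
Proof.
  set (m := scal (/2) (add x y)). set (d := scal (/2) (sub x y)).
  assert (Hx : x = add d m).
  { unfold d, m. rewrite <- scalDr. unfold sub.
    rewrite addACA, addNr, addr0. now rewrite scal_half2. }
  assert (Hy : y = add (opp d) m).
  { unfold d, m. rewrite <- scalNr, <- scalDr, oppB. unfold sub.
    rewrite (addC _ x y), addACA, addNr, addr0. now rewrite scal_half2. }
  rewrite Hx at 1. rewrite Hy at 1. rewrite meetDr.
  replace (meet d (opp d)) with (opp (abs d)) by (unfold meet, abs; now rewrite oppK, supC).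
  unfold d, m. rewrite absZ by lra. unfold sub.
  rewrite (scalDr _ _ (add x y)), scalNr, addC. reflexivity.
Qed.

Definition disjoint x y : Prop :=
  le zr x /\ le zr y /\ (forall w, le w x -> le w y -> le w zr).

Lemma disjoint_sym x y : disjoint x y -> disjoint y x.
Proof. intros (H1 & H2 & H3). repeat split; auto. Qed.
Lemma disjoint_self x : disjoint x x -> x = zr.
Proof. intros (H1 & _ & H3). apply le_antisym; auto. apply H3; apply le_refl. Qed.
(* (x y) _|_ y by the f-property; multiplying y by x once more gives (x y) _|_ (x y). *)
Lemma disjoint_mul x y : disjoint x y -> mul x y = zr.
Proof.
  intro H. assert (Hx : le zr x) by apply H. assert (Hy : le zr y) by apply H.
  pose proof (proj2 (f_prop _ x y y H Hy)) as H1.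
  pose proof (proj1 (f_prop _ y (mul x y) x (disjoint_sym _ _ H1) Hx)) as H2.
  now apply disjoint_self.
Qed.
Lemma disjointP x y : le zr x -> le zr y -> le (meet x y) zr -> disjoint x y.
Proof.
  intros H1 H2 H3. repeat split; auto. intros w Hw1 Hw2.
  apply le_trans with (meet x y); auto. now apply meet_ge.
Qed.
(* e = e^+ - e^-, and e^- = e^- e = -(e^-)^2 <= 0 since e^+ e^- = 0. *)
Lemma one_ge0 : le zr (@one E).
Proof.
  set (pp := sup (@one E) zr). set (np := sup (opp (@one E)) zr).
  assert (Hnp : np = add (opp one) pp).
  { unfold np, pp. rewrite addC, <- supDr, addN, add0, supC. reflexivity. }
  assert (Hdec : one = sub pp np).
  { rewrite Hnp. unfold sub. rewrite oppD, oppK, addC, <- addA, addNr, addr0. reflexivity. }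
  assert (Hd : disjoint np pp).
  { apply disjointP; [apply sup_r|apply sup_r|].
    rewrite Hnp, meetC. rewrite <- (add0 _ pp) at 1. rewrite meetDr.
    unfold meet. rewrite opp0, oppK, supC. fold pp. rewrite addNr. apply le_refl. }
  assert (Hn : np = opp (mul np np)).
  { rewrite <- (one_r _ np) at 1. rewrite Hdec, mulBr, disjoint_mul by auto.
    unfold sub; apply add0. }
  assert (Hz : np = zr).
  { apply le_antisym; [|apply sup_r]. rewrite Hn, <- opp0. apply le_opp, mul_pos; apply sup_r. }
  rewrite Hdec, Hz, sub0. apply sup_r.
Qed.

Fixpoint meetn (F : nat -> E) (N : nat) : E :=
  match N with O => F O | S k => meet (meetn F k) (F (S k)) end.

Lemma meetn_le F N j : (j <= N)%nat -> le (meetn F N) (F j).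
Proof.
  induction N as [|N IH]; intro Hj; simpl; [replace j with O by lia; apply le_refl|].
  destruct (Nat.eq_dec j (S N)) as [->|Hn]; [apply meet_r|].
  apply le_trans with (meetn F N); [apply meet_l|apply IH; lia].
Qed.
Lemma meetn_ge F N u : (forall j, (j <= N)%nat -> le u (F j)) -> le u (meetn F N).
Proof.
  induction N as [|N IH]; intro H; simpl; [apply H; lia|].
  apply meet_ge; [apply IH; intros; apply H; lia|apply H; lia].
Qed.
Lemma meetn_ext F G N : (forall j, (j <= N)%nat -> F j = G j) -> meetn F N = meetn G N.
Proof.
  induction N as [|N IH]; intro H; simpl; [apply H; lia|].
  rewrite IH, H; auto; intros; apply H; lia.
Qed.
Fixpoint pown (x : E) (n : nat) : E :=
  match n with O => one | S k => mul (pown x k) x end.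

Lemma pown_ge0 x n : le zr x -> le zr (pown x n).
Proof. intro H. induction n; simpl; [apply one_ge0|now apply mul_pos]. Qed.

Definition IsInf (S : E -> Prop) (m : E) : Prop :=
  (forall x, S x -> le m x) /\ (forall l, (forall x, S x -> le l x) -> le l m).

End Lattice.

Arguments sup {_}. Arguments meet {_}. Arguments abs {_}.
Arguments meetn {_}. Arguments pown {_}. Arguments IsInf {_}.

Definition on_curve (s t1 t2 : R) : Prop :=
  0 < t1 /\ 0 < t2 /\ Rpower t1 s * Rpower t2 (1 - s) = 1.

Lemma Rpower_gt0 (x y : R) : 0 < Rpower x y.
Proof. unfold Rpower; apply exp_pos. Qed.

Lemma on_curve_1 (s : R) : on_curve s 1 1.
Proof. repeat split; try lra. unfold Rpower. rewrite ln_1, !Rmult_0_r, exp_0. lra. Qed.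

Lemma on_curve_antitone (s t1 t2 u1 u2 : R) : 0 < s < 1 ->
  on_curve s t1 t2 -> on_curve s u1 u2 -> t2 <= u2 -> u1 <= t1.
Proof.
  intros Hs (H1 & H2 & Ht) (H3 & H4 & Hu) Hle.
  destruct (Rle_or_lt u1 t1) as [|Hlt]; auto. exfalso.
  assert (Hlt1 : Rpower t1 s < Rpower u1 s) by (apply Rlt_Rpower_l; lra).
  assert (Hle2 : Rpower t2 (1 - s) <= Rpower u2 (1 - s)) by (apply Rle_Rpower_l; lra).
  pose proof (Rpower_gt0 t2 (1 - s)). pose proof (Rpower_gt0 u1 s).
  assert (Rpower t1 s * Rpower t2 (1 - s) < Rpower u1 s * Rpower u2 (1 - s)); [|lra].
  apply Rlt_le_trans with (Rpower u1 s * Rpower t2 (1 - s));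
    [apply Rmult_lt_compat_r|apply Rmult_le_compat_l]; lra.
Qed.

Lemma grid_cell (d x : R) (m : nat) : x <= d * INR m -> 0 < x ->
  exists j : nat, (j < m)%nat /\ d * INR j <= x <= d * (INR j + 1).
Proof.
  induction m as [|m IH]; intros Hm Hx; [simpl in Hm; lra|].
  destruct (Rle_or_lt x (d * INR m)) as [H|H].
  - destruct (IH H Hx) as (j & Hj1 & Hj2). exists j. split; [lia|auto].
  - exists m. rewrite S_INR in Hm. split; [lia|lra].
Qed.

Definition curve_net (s eps : R) (N : nat) (f1 f2 : nat -> R) : Prop :=
  (forall j, (j <= N)%nat -> on_curve s (f1 j) (f2 j)) /\
  (forall t1 t2, on_curve s t1 t2 -> exists j, (j <= N)%nat /\
     s * f1 j <= s * t1 + eps /\ (1 - s) * f2 j <= (1 - s) * t2 + eps).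

(* With (eps/s, U) on the curve, points with t2 >= U have t1 <= eps/s; below U the t2-axis is cut into
   cells of length eps/(1-s), and on each cell the curve point at its right
   end is eps-close, t1 being decreasing in t2. *)
Lemma curve_net_exists (s eps : R) : 0 < s < 1 -> 0 < eps ->
  exists N f1 f2, curve_net s eps N f1 f2.
Proof.
  intros Hs He.
  set (d := eps / (1 - s)). assert (Hd : 0 < d) by (apply Rdiv_lt_0_compat; lra).
  set (T1 := eps / s). assert (HT1 : 0 < T1) by (apply Rdiv_lt_0_compat; lra).
  set (U := Rpower T1 (- (s / (1 - s)))).
  destruct (INR_unbounded (U / d)) as [N HN].
  assert (HUN : U < d * INR N).
  { apply Rmult_lt_compat_l with (r := d) in HN; auto. unfold Rdiv in HN.
    rewrite <- Rmult_assoc, (Rmult_comm d U), Rmult_assoc, Rinv_r, Rmult_1_r in HN; lra. }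
  set (f2 := fun j : nat => if (j <? N)%nat then d * (INR j + 1) else U).
  set (f1 := fun j : nat => if (j <? N)%nat then Rpower (f2 j) (- ((1 - s) / s)) else T1).
  assert (Hon : forall j, (j <= N)%nat -> on_curve s (f1 j) (f2 j)).
  { intros j Hj. unfold f1, f2. destruct (j <? N)%nat.
    - assert (Hpos : 0 < d * (INR j + 1)) by (pose proof (pos_INR j); nra).
      split; [apply Rpower_gt0|split; auto].
      rewrite Rpower_mult, <- Rpower_plus.
      replace (- ((1 - s) / s) * s + (1 - s)) with 0 by (field; lra). now apply Rpower_O.
    - split; [auto|split; [apply Rpower_gt0|]]. unfold U. rewrite Rpower_mult, <- Rpower_plus.
      replace (s + - (s / (1 - s)) * (1 - s)) with 0 by (field; lra). now apply Rpower_O. }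
  exists N, f1, f2. split; auto.
  intros t1 t2 Ht. pose proof Ht as (H1 & H2 & _).
  destruct (Rle_or_lt U t2) as [HU|HU].
  - exists N. split; [lia|]. unfold f1, f2. rewrite Nat.ltb_irrefl. unfold T1.
    replace (s * (eps / s)) with eps by (field; lra). nra.
  - destruct (grid_cell d t2 N) as (j & Hj1 & Hj2 & Hj3); [lra|auto|].
    assert (Hf2 : f2 j = d * (INR j + 1)) by (unfold f2; apply Nat.ltb_lt in Hj1; now rewrite Hj1).
    exists j. split; [lia|split].
    + assert (f1 j <= t1); [|nra].
      apply (on_curve_antitone s t1 t2 (f1 j) (f2 j)); auto; [apply Hon; lia|lra].
    + rewrite Hf2. assert (Hdd : (1 - s) * d = eps) by (unfold d; field; lra).
      assert (eps * INR j <= (1 - s) * t2); [|nra].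
      rewrite <- Hdd, Rmult_assoc. apply Rmult_le_compat_l; lra.
Qed.

Section WeightedMean.
Variable E : RPhi.

Definition wgm_comb (s : R) (x : E) (t1 t2 : R) : E :=
  add (scal (s * t1) x) (scal ((1 - s) * t2) one).

Definition wgm_set (s : R) (x : E) : E -> Prop :=
  fun y => exists t1 t2, on_curve s t1 t2 /\ y = wgm_comb s x t1 t2.

Lemma wgm_set_nonempty s x : exists y, wgm_set s x y.
Proof. exists (wgm_comb s x 1 1), 1, 1. split; [apply on_curve_1|reflexivity]. Qed.

Lemma meetn_wgm_comb_between (s eps : R) (x q : E) N f1 f2 :
  0 < s < 1 -> le zr x -> IsInf (wgm_set s x) q -> curve_net s eps N f1 f2 ->
  le q (meetn (fun j => wgm_comb s x (f1 j) (f2 j)) N) /\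
  le (meetn (fun j => wgm_comb s x (f1 j) (f2 j)) N) (add q (scal eps (add x one))).
Proof.
  intros Hs Hx [Hq1 Hq2] [Hon Hnet]. split.
  - apply meetn_ge. intros j Hj. apply Hq1. exists (f1 j), (f2 j); auto.
  - apply le_subl_addr, Hq2. intros y (t1 & t2 & Ht & ->).
    destruct (Hnet t1 t2 Ht) as (j & Hj & Ha & Hb). apply le_addr_subl.
    apply le_trans with (wgm_comb s x (f1 j) (f2 j));
      [exact (meetn_le _ (fun j => wgm_comb s x (f1 j) (f2 j)) N j Hj)|].
    unfold wgm_comb. rewrite scalDr, addACA, <- !scalDl.
    apply le_add2; apply le_scal2l; auto using one_ge0; lra.
Qed.

Definition HasWgmInf : Prop :=
  forall s x, 0 < s < 1 -> le zr x -> exists q, IsInf (wgm_set s x) q.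

Definition IsRPowR (x : E) (r : R) (p : E) : Prop :=
  exists (n : nat) (q : E),
    INR n <= r < INR n + 1 /\
    (r = INR n -> q = one) /\
    (r <> INR n -> IsInf (wgm_set (r - INR n) x) q) /\
    p = mul (pown x n) q.

End WeightedMean.

Arguments wgm_comb {_}. Arguments wgm_set {_}. Arguments IsRPowR {_}.

Record PhiHomOn (A B : RPhi) (C : A -> Prop) (T : A -> B) : Prop := {
  dom_add : forall x y, C x -> C y -> C (add x y);
  dom_scal : forall c x, C x -> C (scal c x);
  dom_mul : forall x y, C x -> C y -> C (mul x y);
  dom_one : C one;
  dom_abs : forall x, C x -> C (abs x);
  hom_add : forall x y, C x -> C y -> T (add x y) = add (T x) (T y);
  hom_scal : forall c x, C x -> T (scal c x) = scal c (T x);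
  hom_abs : forall x, C x -> T (abs x) = abs (T x);
  hom_mul : forall x y, C x -> C y -> T (mul x y) = mul (T x) (T y);
  hom_one : T one = one }.

Arguments dom_add {A B C T}. Arguments dom_scal {A B C T}. Arguments dom_mul {A B C T}.
Arguments dom_one {A B C T}. Arguments dom_abs {A B C T}. Arguments hom_add {A B C T}.
Arguments hom_scal {A B C T}. Arguments hom_abs {A B C T}. Arguments hom_mul {A B C T}.
Arguments hom_one {A B C T}.

Section PhiHom.
Variables (A B : RPhi) (C : A -> Prop) (T : A -> B).
Hypothesis HT : PhiHomOn A B C T.

Lemma hom_sub x y : C x -> C y -> C (sub x y) /\ T (sub x y) = sub (T x) (T y).
Proof.
  intros Hx Hy. unfold sub. rewrite <- !scalN1.
  assert (Hy' : C (scal (-1) y)) by now apply (dom_scal HT).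
  split; [now apply (dom_add HT)|]. rewrite (hom_add HT), (hom_scal HT); auto.
Qed.

Lemma hom_meet x y : C x -> C y -> C (meet x y) /\ T (meet x y) = meet (T x) (T y).
Proof.
  intros Hx Hy. rewrite !meet_abs.
  assert (Hxy : C (add x y)) by now apply (dom_add HT).
  destruct (hom_sub x y Hx Hy) as [H1 H2].
  assert (Ha : C (abs (sub x y))) by now apply (dom_abs HT).
  destruct (hom_sub _ _ Hxy Ha) as [H3 H4]. split; [now apply (dom_scal HT)|].
  rewrite (hom_scal HT), H4, (hom_add HT), (hom_abs HT), H2; auto.
Qed.

Lemma hom_zero : C zr /\ T zr = zr.
Proof.
  rewrite <- (scal0l _ one). split; [apply (dom_scal HT), (dom_one HT)|].
  rewrite (hom_scal HT) by apply (dom_one HT). apply scal0l.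
Qed.

Lemma hom_le x y : C x -> C y -> le x y -> le (T x) (T y).
Proof.
  intros Hx Hy H. destruct (hom_sub y x Hy Hx) as [H1 H2].
  apply subr_ge0_le. rewrite <- H2, <- (abs_id _ _ (subr_ge0 _ _ _ H)), (hom_abs HT); auto.
  apply abs_ge0.
Qed.

Lemma hom_ge0 x : C x -> le zr x -> le zr (T x).
Proof. intros Hx H. destruct hom_zero as [H0 <-]. now apply hom_le. Qed.

Lemma hom_pown x n : C x -> C (pown x n) /\ T (pown x n) = pown (T x) n.
Proof.
  intro Hx. induction n as [|n [IH1 IH2]]; simpl; [split; [apply (dom_one HT)|apply (hom_one HT)]|].
  split; [now apply (dom_mul HT)|]. rewrite (hom_mul HT), IH2; auto.
Qed.

Lemma hom_meetn F N : (forall j, (j <= N)%nat -> C (F j)) ->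
  C (meetn F N) /\ T (meetn F N) = meetn (fun j => T (F j)) N.
Proof.
  induction N as [|N IH]; intro H; simpl; [split; auto; apply H; lia|].
  destruct IH as [H1 H2]; [intros; apply H; lia|].
  destruct (hom_meet (meetn F N) (F (S N)) H1 (H _ (le_n _))) as [H3 H4].
  split; auto. now rewrite H4, H2.
Qed.

Lemma hom_wgm_comb s x t1 t2 : C x ->
  C (wgm_comb s x t1 t2) /\ T (wgm_comb s x t1 t2) = wgm_comb s (T x) t1 t2.
Proof.
  intro Hx. unfold wgm_comb. pose proof (dom_one HT).
  assert (C (scal (s * t1) x) /\ C (scal ((1 - s) * t2) one)) as [H1 H2]
    by (split; now apply (dom_scal HT)).
  split; [now apply (dom_add HT)|].
  rewrite (hom_add HT), !(hom_scal HT), (hom_one HT); auto.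
Qed.

Lemma hom_mul_meetn_wgm_comb c s x N f1 f2 : C c -> C x ->
  let W := meetn (fun j => wgm_comb s x (f1 j) (f2 j)) N in
  C (mul c W) /\
  T (mul c W) = mul (T c) (meetn (fun j => wgm_comb s (T x) (f1 j) (f2 j)) N).
Proof.
  intros Hc Hx W.
  destruct (hom_meetn (fun j => wgm_comb s x (f1 j) (f2 j)) N) as [HW HTW];
    [intros; now apply hom_wgm_comb|].
  subst W. split; [now apply (dom_mul HT)|]. rewrite (hom_mul HT), HTW; auto.
  f_equal. apply meetn_ext. intros j _. now apply hom_wgm_comb.
Qed.

(* The core estimate: T(c q) and (T c) q' are squeezed by T(c W) for the
   finite meets W of [meetn_wgm_comb_between]. *)
Lemma hom_mul_wgm_inf (a c : A) (s : R) (q : A) (q' : B) :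
  0 < s < 1 -> C a -> le zr a -> C c -> le zr c ->
  IsInf (wgm_set s a) q -> IsInf (wgm_set s (T a)) q' ->
  C (mul c q) -> T (mul c q) = mul (T c) q'.
Proof.
  intros Hs HCa Ha HCc Hc Hq Hq' HCcq.
  set (b := T a). set (d := T c).
  assert (Hb : le zr b) by now apply hom_ge0.
  assert (Hd : le zr d) by now apply hom_ge0.
  set (z := mul d (add b one)).
  assert (Hz : le zr z) by (apply mul_pos, le0_add; auto using one_ge0).
  assert (Hwin : forall eps, 0 < eps -> exists w,
    le (T (mul c q)) w /\ le w (add (T (mul c q)) (scal eps z)) /\
    le (mul d q') w /\ le w (add (mul d q') (scal eps z))).
  { intros eps He. destruct (curve_net_exists s eps Hs He) as (N & f1 & f2 & Hnet).
    destruct (meetn_wgm_comb_between A s eps a q N f1 f2) as [HA1 HA2]; auto.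
    destruct (meetn_wgm_comb_between B s eps b q' N f1 f2) as [HB1 HB2]; auto.
    destruct (hom_mul_meetn_wgm_comb c s a N f1 f2) as [HCW HTW]; auto.
    fold b d in HTW.
    set (WA := meetn (fun j => wgm_comb s a (f1 j) (f2 j)) N) in *.
    set (WB := meetn (fun j => wgm_comb s b (f1 j) (f2 j)) N) in *.
    assert (HC1 : C one) by apply (dom_one HT).
    assert (HCa1 : C (add a one)) by now apply (dom_add HT).
    assert (HCs : C (scal eps (mul c (add a one)))) by now apply (dom_scal HT), (dom_mul HT).
    assert (HCr : C (add (mul c q) (scal eps (mul c (add a one))))) by now apply (dom_add HT).
    assert (HTr : T (add (mul c q) (scal eps (mul c (add a one)))) = add (T (mul c q)) (scal eps z)).
    { rewrite (hom_add HT), (hom_scal HT), (hom_mul HT c (add a one)),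
        (hom_add HT), (hom_one HT); auto.
      now apply (dom_mul HT). }
    exists (mul d WB). rewrite <- HTW. split; [|split; [|split]].
    - apply hom_le; auto. now apply le_mul2l.
    - rewrite <- HTr. apply hom_le; auto.
      rewrite <- mul_scalr, <- mulDr. now apply le_mul2l.
    - rewrite HTW. now apply le_mul2l.
    - rewrite HTW. unfold z. rewrite <- mul_scalr, <- mulDr. now apply le_mul2l. }
  apply le_antisym; apply (le_of_le_add_eps _ _ _ z Hz); intros eps He;
    destruct (Hwin eps He) as (w & H1 & H2 & H3 & H4); eapply le_trans; eauto.
Qed.

Lemma hom_IsRPowR (HB : HasWgmInf B) (a : A) (r : R) (p : A) :
  C a -> le zr a -> C p -> IsRPowR a r p -> IsRPowR (T a) r (T p).
Proof.
  intros HCa Ha HCp (n & q & Hn & Hint & Hnon & ->).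
  destruct (hom_pown a n HCa) as [HCc HTc].
  destruct (Req_dec r (INR n)) as [Heq|Hneq].
  - exists n, one. split; [|split; [|split]]; auto; [intro; contradiction|].
    rewrite (Hint Heq), !one_r in *. exact HTc.
  - assert (Hs : 0 < r - INR n < 1) by lra.
    destruct (HB _ (T a) Hs) as [q' Hq']; [now apply hom_ge0|].
    exists n, q'. split; [|split; [|split]]; auto; [intro; contradiction|].
    rewrite <- HTc. apply (hom_mul_wgm_inf a _ (r - INR n)); auto using pown_ge0.
Qed.

End PhiHom.

Definition emb (K : Kfield) (E : RPhi) : E -> Kcar K E :=
  match K as K0 return E -> Kcar K0 E with
  | Kreal => fun x => x
  | Kcomplex => fun x => (x, zr)
  end.

Definition prj (K : Kfield) (E : RPhi) : Kcar K E -> E :=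
  match K as K0 return Kcar K0 E -> E with
  | Kreal => fun x => x
  | Kcomplex => fun x => fst x
  end.

Definition embS (K : Kfield) : R -> Kscalar K :=
  match K as K0 return R -> Kscalar K0 with
  | Kreal => fun c => c
  | Kcomplex => fun c => (c, 0)
  end.

Section RealPart.
Variables (K : Kfield) (E : RPhi).
Implicit Types x y : E.

Lemma prj_emb x : prj K E (emb K E x) = x.
Proof. destruct K; reflexivity. Qed.
Lemma emb_inj x y : emb K E x = emb K E y -> x = y.
Proof. intro H. rewrite <- (prj_emb x), H. apply prj_emb. Qed.
Lemma Kadd_emb x y : Kadd K E (emb K E x) (emb K E y) = emb K E (add x y).
Proof. destruct K; simpl; auto. now rewrite add0. Qed.
Lemma Kopp_emb x : Kopp K E (emb K E x) = emb K E (opp x).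
Proof. destruct K; simpl; auto. now rewrite opp0. Qed.
Lemma Krscal_emb c x : Krscal K E c (emb K E x) = emb K E (scal c x).
Proof. destruct K; simpl; auto. now rewrite scal0r. Qed.
Lemma Kscal_emb c x : Kscal K E (embS K c) (emb K E x) = emb K E (scal c x).
Proof. destruct K; simpl; auto. now rewrite !scal0l, !scal0r, !opp0, !addr0. Qed.
Lemma Kmul_emb x y : Kmul K E (emb K E x) (emb K E y) = emb K E (mul x y).
Proof. destruct K; simpl; auto. now rewrite !mul0l, !mul0r, !opp0, !addr0. Qed.
Lemma Kone_emb : Kone K E = emb K E one.
Proof. destruct K; reflexivity. Qed.
Lemma Kpow_emb x n : Kpow_nat K E (emb K E x) n = emb K E (pown x n).
Proof. induction n; simpl; [apply Kone_emb|]. rewrite IHn. apply Kmul_emb. Qed.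
Lemma Kadd0 u : Kadd K E (Kzero K E) u = u.
Proof. destruct K; simpl; [apply add0|]. destruct u; simpl; now rewrite !add0. Qed.

(* Over C the modulus of a real x is the sup of cos(t) x, attained at t = 0, pi. *)
Lemma IsAbs_emb x m : IsAbs K E (emb K E x) m <-> m = emb K E (abs x).
Proof.
  destruct K; simpl; [apply IsSup_sup|].
  assert (HS : IsSup E (fun v => exists t, 0 <= t <= 2 * PI /\
                 v = add (scal (cos t) x) (scal (sin t) zr)) (abs x)).
  { pose proof PI_RGT_0 as Hpi. split.
    - intros v (t & Ht & ->). rewrite scal0r, addr0. apply scal_le_abs, COS_bound.
    - intros u H. apply sup_le.
      + replace x with (add (scal (cos 0) x) (scal (sin 0) zr)) at 1
          by (rewrite cos_0, sin_0, scal1, scal0r, addr0; reflexivity).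
        apply H. exists 0. split; [lra|reflexivity].
      + replace (opp x) with (add (scal (cos PI) x) (scal (sin PI) zr))
          by (rewrite cos_PI, sin_PI, scal0r, addr0, scalN1; reflexivity).
        apply H. exists PI. split; [lra|reflexivity]. }
  split.
  - intros [H1 H2]. destruct m as [m1 m2]. simpl in *. subst m2. f_equal.
    eapply IsSup_unique; eauto.
  - intros ->. simpl. split; auto.
Qed.

Lemma IsAbs_real u m : IsAbs K E u m -> m = emb K E (prj K E m).
Proof. destruct K; simpl; auto. intros [H _]. destruct m; simpl in *; now subst. Qed.

Lemma Kpos_emb x : Kpos K E (emb K E x) <-> le zr x.
Proof.
  unfold Kpos. rewrite IsAbs_emb. split.
  - intro H. apply emb_inj in H. rewrite H. apply abs_ge0.
  - intro H. now rewrite abs_id.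
Qed.

Lemma Kpos_real u : Kpos K E u -> exists x, u = emb K E x /\ le zr x.
Proof.
  intro H. exists (prj K E u). split; [now apply (IsAbs_real u)|].
  apply Kpos_emb. now rewrite <- (IsAbs_real _ _ H).
Qed.

Lemma Kle_emb x y : Kle K E (emb K E x) (emb K E y) <-> le x y.
Proof.
  unfold Kle. rewrite Kopp_emb, Kadd_emb, Kpos_emb.
  split; [apply subr_ge0_le|apply subr_ge0].
Qed.

Lemma Kle_real m x : Kle K E m (emb K E x) -> exists mr, m = emb K E mr.
Proof.
  destruct K; simpl; [eauto|]. unfold Kle, Kpos. simpl. intros [H _].
  exists (fst m). destruct m as [m1 m2]; simpl in *. rewrite add0 in H.
  f_equal. rewrite <- opp0, <- H. now rewrite oppK.
Qed.

Lemma KIsInf_emb (S : Kcar K E -> Prop) (P : E -> Prop) m :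
  (forall u, S u <-> exists x, P x /\ u = emb K E x) -> (exists x, P x) ->
  KIsInf K E S m <-> exists mr, m = emb K E mr /\ IsInf P mr.
Proof.
  intros HS [x0 Hx0]. split.
  - intros [H1 H2].
    destruct (Kle_real m x0) as [mr ->]; [apply H1, HS; eauto|].
    exists mr. split; [reflexivity|split].
    + intros x Hx. apply Kle_emb. apply H1, HS; eauto.
    + intros l Hl. apply Kle_emb, H2. intros u Hu. apply HS in Hu.
      destruct Hu as (x & Hx & ->). now apply Kle_emb, Hl.
  - intros (mr & -> & H1 & H2). split.
    + intros u Hu. apply HS in Hu. destruct Hu as (x & Hx & ->). now apply Kle_emb, H1.
    + intros l Hl. destruct (Kle_real l x0) as [lr ->]; [apply Hl, HS; eauto|].
      apply Kle_emb, H2. intros x Hx. apply Kle_emb, Hl, HS; eauto.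
Qed.

Lemma wgm_set_emb s x u :
  (exists t1 t2, 0 < t1 /\ 0 < t2 /\ Rpower t1 s * Rpower t2 (1 - s) = 1 /\
     u = Kadd K E (Krscal K E (s * t1) (emb K E x)) (Krscal K E ((1 - s) * t2) (Kone K E)))
  <-> exists y, wgm_set s x y /\ u = emb K E y.
Proof.
  assert (Hc : forall t1 t2, Kadd K E (Krscal K E (s * t1) (emb K E x))
      (Krscal K E ((1 - s) * t2) (Kone K E)) = emb K E (wgm_comb s x t1 t2)).
  { intros. unfold wgm_comb. now rewrite Kone_emb, !Krscal_emb, Kadd_emb. }
  split.
  - intros (t1 & t2 & H1 & H2 & H3 & ->). exists (wgm_comb s x t1 t2). rewrite Hc.
    split; [exists t1, t2; repeat split|]; auto.
  - intros (y & (t1 & t2 & (H1 & H2 & H3) & ->) & ->). exists t1, t2. rewrite Hc. now repeat split.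
Qed.

Lemma IsRPow_emb x r p :
  IsRPow K E (emb K E x) r p <-> exists pr, p = emb K E pr /\ IsRPowR x r pr.
Proof.
  pose proof (wgm_set_nonempty E) as Hne.
  split.
  - intros (n & q & Hn & Hint & Hnon & ->).
    destruct (Req_dec r (INR n)) as [Heq|Hneq].
    + exists (mul (pown x n) one). split.
      * now rewrite (Hint Heq), Kone_emb, Kpow_emb, Kmul_emb.
      * exists n, one. split; [exact Hn|split; [auto|split; [intro; contradiction|auto]]].
    + destruct (proj1 (KIsInf_emb _ _ q (wgm_set_emb _ x) (Hne _ x)) (Hnon Hneq))
        as (qr & -> & Hqr).
      exists (mul (pown x n) qr). split; [now rewrite Kpow_emb, Kmul_emb|].
      exists n, qr. split; [exact Hn|split; [intro; contradiction|split; auto]].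
  - intros (pr & -> & n & qr & Hn & Hint & Hnon & ->).
    exists n, (emb K E qr). split; [exact Hn|split; [|split]].
    + intro Heq. now rewrite (Hint Heq), Kone_emb.
    + intro Hneq. apply (KIsInf_emb _ _ _ (wgm_set_emb _ x) (Hne _ x)). eauto.
    + now rewrite Kpow_emb, Kmul_emb.
Qed.

Lemma WGMClosed_wgm_inf : WGMClosed K E -> HasWgmInf E.
Proof.
  intros HW s x Hs Hx.
  set (w := fun k : nat => if Nat.eqb k 0 then s else 1 - s).
  set (g := fun k : nat => if Nat.eqb k 0 then emb K E x else Kone K E).
  destruct (HW 2%nat g w g) as [m Hm].
  { intros [|[|k]] Hk; unfold w; simpl; [lra|lra|lia]. }
  { unfold w; simpl. lra. }
  { intros [|[|k]] Hk; unfold g; simpl; [|rewrite Kone_emb|lia];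
      apply IsAbs_emb; rewrite abs_id; auto using one_ge0. }
  assert (HS : forall u, (exists th : nat -> R, (forall k, (k < 2)%nat -> 0 < th k) /\
       Rprodn 2 (fun k => Rpower (th k) (w k)) = 1 /\
       u = Ksum K E 2 (fun k => Krscal K E (w k * th k) (g k))) <->
     exists y, wgm_set s x y /\ u = emb K E y).
  { intro u. rewrite <- wgm_set_emb. unfold w, g. simpl. split.
    - intros (th & Hth & Hpr & ->). rewrite Kadd0.
      exists (th 0%nat), (th 1%nat). repeat split; try (apply Hth; lia). lra.
    - intros (t1 & t2 & H1 & H2 & Ht & ->).
      exists (fun k => if Nat.eqb k 0 then t1 else t2).
      split; [intros [|k] _; simpl; auto|]. simpl. rewrite Kadd0. split; [lra|reflexivity]. }
  destruct (proj1 (KIsInf_emb _ _ m HS (wgm_set_nonempty E s x)) Hm) as (q & _ & Hq).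
  now exists q.
Qed.

End RealPart.

Section RealPartHom.
Variables (K : Kfield) (A B : RPhi) (C : Kcar K A -> Prop) (T : Kcar K A -> Kcar K B).
Hypotheses (HC : KPhiSub K A C) (HT : KLatHomOn K A B C T).

(* x = |x| - (|x| - x) with both terms positive, so T x is a difference of
   moduli, which are real. *)
Lemma hom_emb_real x : C (emb K A x) -> T (emb K A x) = emb K B (prj K B (T (emb K A x))).
Proof.
  intro Hx. destruct HC as (Cadd & Cscal & _ & _ & Cabs).
  destruct HT as [[Tadd Tscal] Tabs].
  set (z := sub (abs x) x).
  assert (Ha : IsAbs K A (emb K A x) (emb K A (abs x))) by now apply IsAbs_emb.
  assert (HCa : C (emb K A (abs x))) by (eapply Cabs; eauto).
  assert (HCz : C (emb K A z)).
  { replace (emb K A z) with (Kadd K A (emb K A (abs x)) (Kscal K A (embS K (-1)) (emb K A x)))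
      by now rewrite Kscal_emb, Kadd_emb, scalN1.
    auto. }
  assert (Hz : IsAbs K A (emb K A z) (emb K A z)).
  { apply IsAbs_emb. rewrite abs_id; [reflexivity|]. apply subr_ge0, le_abs. }
  replace (emb K A x) with (Kadd K A (emb K A (abs x)) (Kscal K A (embS K (-1)) (emb K A z))).
  - rewrite Tadd, Tscal, (IsAbs_real _ _ _ _ (Tabs _ _ Hx Ha)),
      (IsAbs_real _ _ _ _ (Tabs _ _ HCz Hz)), Kscal_emb, Kadd_emb, prj_emb; auto.
  - rewrite Kscal_emb, Kadd_emb, scalN1. unfold z. rewrite oppB. unfold sub.
    rewrite addC, addKr. reflexivity.
Qed.

Lemma PhiHomOn_real_part :
  KMultOn K A B C T -> T (Kone K A) = Kone K B ->
  PhiHomOn A B (fun x => C (emb K A x)) (fun x => prj K B (T (emb K A x))).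
Proof.
  intros HM HTe. pose proof hom_emb_real as TR.
  destruct HC as (Cadd & Cscal & Cmul & Cone & Cabs).
  destruct HT as [[Tadd Tscal] Tabs]. split.
  - intros x y Hx Hy. rewrite <- Kadd_emb. auto.
  - intros c x Hx. rewrite <- Kscal_emb. auto.
  - intros x y Hx Hy. rewrite <- Kmul_emb. auto.
  - rewrite <- Kone_emb. auto.
  - intros x Hx. eapply Cabs; eauto. now apply IsAbs_emb.
  - intros x y Hx Hy. rewrite <- Kadd_emb, Tadd, (TR x Hx), (TR y Hy), Kadd_emb, !prj_emb; auto.
  - intros c x Hx. rewrite <- Kscal_emb, Tscal, (TR x Hx), Kscal_emb, !prj_emb; auto.
  - intros x Hx. assert (Ha : IsAbs K A (emb K A x) (emb K A (abs x))) by now apply IsAbs_emb.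
    pose proof (Tabs _ _ Hx Ha) as H. rewrite (TR x Hx) in H. apply IsAbs_emb in H.
    rewrite H. apply prj_emb.
  - intros x y Hx Hy. rewrite <- Kmul_emb, HM, (TR x Hx), (TR y Hy), Kmul_emb, !prj_emb; auto.
  - rewrite <- Kone_emb, HTe, Kone_emb. apply prj_emb.
Qed.

End RealPartHom.

Theorem corollary4p4 (K : Kfield) (A B : RPhi)
  (HA : KVL K A) (HB : KVL K B)
  (HwA : WGMClosed K A) (HwB : WGMClosed K B)
  (C : Kcar K A -> Prop) (HC : KPhiSub K A C)
  (T : Kcar K A -> Kcar K B)
  (HTlat : KLatHomOn K A B C T) (HTmul : KMultOn K A B C T)
  (HTe : T (Kone K A) = Kone K B)
  (a : Kcar K A) (ha : Kpos K A a) (r : R) (hr : 0 < r)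
  (haC : C a) (p : Kcar K A) (hp : IsRPow K A a r p) (hpC : C p) :
  IsRPow K B (T a) r (T p).
Proof.
  pose proof (PhiHomOn_real_part K A B C T HC HTlat HTmul HTe) as HT.
  destruct (Kpos_real K A a ha) as (x & -> & Hx).
  destruct (proj1 (IsRPow_emb K A x r p) hp) as (pr & -> & Hpr).
  rewrite (hom_emb_real K A B C T HC HTlat x haC), (hom_emb_real K A B C T HC HTlat pr hpC).
  apply IsRPow_emb. eexists; split; [reflexivity|].
  exact (hom_IsRPowR _ _ _ _ HT (WGMClosed_wgm_inf K B HwB) x r pr haC Hx hpC Hpr).
Qed.
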